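(* Let $0\le \rho_m\le\rho_M\le\rho_{\max}$ and let $g,v,w_\eta$ satisfy the standing assumptions (A) below. Let $h>0$, $N\in\mathbb{N}$ with $Nh=\eta$, and let a quadrature rule with nodes $y_1,\dots,y_R\in[0,1]$, $y_R=1$, and weights $\gamma_1,\dots,\gamma_R>0$, $\sum_{\nu=1}^R\gamma_\nu=1$, be given, such that $$h\sum_{k=0}^{N-1}\sum_{\nu=1}^{R}\gamma_\nu\, w_\eta^{\nu,k}=1,\qquad w_\eta^{\nu,k}:=w_\eta\big((k+y_\nu)h\big).$$ Suppose that at time $t^n$ we are given cell averages $\bar\rho_j^n\in[\rho_m,\rho_M]$ ($j\in\mathbb{Z}$) and, for every $l\in\mathbb{Z}$, a polynomial $P_l$ on $I_l=[x_{l-1/2},x_{l+1/2}]$ (with $x_{l+1/2}-x_{l-1/2}=h$) such that $\frac1h\int_{I_l}P_l(x)\,dx=\bar\rho_l^n$, the quadrature rule is exact for $P_l$, i.e. $\frac1h\int_{I_l}P_l\,dx=\sum_{\nu}\gamma_\nu P_l(x_{l-1/2}+y_\nu h)$, and all reconstructed values $\rho_l^\nu:=P_l(x_{l-1/2}+y_\nu h)$ lie in $[\rho_m,\rho_M]$. Define $\rho^-_{j+1/2}:=P_j(x_{j+1/2})\,(=\rho_j^R)$, $$V_{j+1/2}:=v\Big(h\sum_{k=0}^{N-1}\sum_{\nu=1}^R\gamma_\nu w_\eta^{\nu,k}\rho^\nu_{j+k+1}\Big),$$ and, for $\tau>0$, the forward Euler update $$\bar\rho_j^{n+1}=\bar\rho_j^n-\frac{\tau}{h}\Big(V_{j+1/2}\,g(\rho^-_{j+1/2})-V_{j-1/2}\,g(\rho^-_{j-1/2})\Big),\quad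 j\in\mathbb{Z}.$$ If $$\tau\le\frac{\gamma_R h}{\gamma_R h\, w_\eta(0)\,\|v'\|\,\|g\|+\|v\|\,\|g'\|},$$ where $\|\cdot\|$ denotes the sup norm on $[0,\rho_{\max}]$, then $\rho_m\le\bar\rho_j^{n+1}\le\rho_M$ for all $j\in\mathbb{Z}$.
   Context: Standing assumptions (A): $\rho_{\max}>0$, $\eta>0$; $g\in C^1([0,\rho_{\max}];\mathbb{R}_{\ge0})$ with $g'\ge0$; $v\in C^1([0,\rho_{\max}];\mathbb{R}_{\ge0})$ with $v'\le0$; $w_\eta\in C^1([0,\eta];\mathbb{R}_{\ge0})$ with $w_\eta'\le0$ and $\int_0^\eta w_\eta(x)\,dx=1$. These arise from the non-local conservation law $\rho_t+(g(\rho)v(\rho*w_\eta))_x=0$ with $(\rho*w_\eta)(t,x)=\int_x^{x+\eta}w_\eta(y-x)\rho(t,y)\,dy$, discretized on a uniform grid $x_j=x_0+jh$, $x_{j\pm1/2}=x_j\pm h/2$. *)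

From Stdlib Require Import Reals Lra ZArith List.
Open Scope R_scope.

Fixpoint rsum (n : nat) (f : nat -> R) : R :=
  match n with O => 0 | S m => rsum m f + f m end.

(* polynomial given by its coefficient list [a0; a1; ...], Horner evaluation *)
Fixpoint peval (c : list R) (x : R) : R :=
  match c with nil => 0 | a :: c' => a + x * peval c' x end.

Definition cont_on (f : R -> R) (a b : R) : Prop :=
  forall x, a <= x <= b -> limit1_in f (fun z => a <= z <= b) (f x) x.

Definition C1_on (f df : R -> R) (a b : R) : Prop :=
  cont_on f a b /\ cont_on df a b /\
  (forall x, a < x < b -> derivable_pt_lim f x (df x)).

Definition is_supnorm (f : R -> R) (a b nrm : R) : Prop :=
  is_lub (fun y => exists x, a <= x <= b /\ y = Rabs (f x)) nrm.

(* grid: x_j = x0 + j h ; x_{j+1/2} = x0 + j h + h/2 *)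
Definition xmid (x0 h : R) (j : Z) : R := x0 + IZR j * h.
Definition xhalf (x0 h : R) (j : Z) : R := xmid x0 h j + h / 2.

Definition recon (x0 h : R) (y : nat -> R) (P : Z -> list R) (l : Z) (nu : nat) : R :=
  peval (P l) (xmid x0 h l - h / 2 + y nu * h).

(* V_{j+1/2}; quadrature nodes/weights indexed nu = 1..Rn *)
Definition Vface (v w : R -> R) (h : R) (N Rn : nat) (gam y : nat -> R)
    (x0 : R) (P : Z -> list R) (j : Z) : R :=
  v (h * rsum N (fun k => rsum Rn (fun i =>
        gam (S i) * w ((INR k + y (S i)) * h) *
        recon x0 h y P (j + Z.of_nat k + 1)%Z (S i)))).

Definition euler_update (g v w : R -> R) (h tau : R) (N Rn : nat)
    (gam y : nat -> R) (x0 : R) (P : Z -> list R) (rbar : Z -> R) (j : Z) : R :=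
  rbar j - tau / h *
    (Vface v w h N Rn gam y x0 P j * g (peval (P j) (xhalf x0 h j))
     - Vface v w h N Rn gam y x0 P (j - 1)%Z
         * g (peval (P (j - 1)%Z) (xhalf x0 h (j - 1)%Z))).

From Stdlib Require Import Reals Lra Lia ZArith List.
Open Scope R_scope.

(* Write the update as [rbar_j - tau/h X] with [X = v(A+) g(a) - v(A-) g(b)], where
   [a = rho_j^R], [b = rho_(j-1)^R] and [A+-] are the nonlocal arguments, and split
   [X = v(A+) (g a - g b) + g b (v(A+) - v(A-))].  As [g] is nondecreasing, the first term
   is at most [|v| |g'| (a - rho_m)], and [gamma_R (a - rho_m) <= rbar_j - rho_m] because
   the quadrature of cell [j] is exact and all its nodal values exceed [rho_m].  The
   arguments [A+] and [A-] are quadratures of [rho * w_eta] over windows shifted by one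
   cell; summing by parts against the nonincreasing kernel gives
   [A+ - A- >= h w_eta(0) (rho_m - rbar_j)], so the second term is at most
   [|g| |v'| h w_eta(0) (rbar_j - rho_m)].  The CFL condition turns the sum of the two
   bounds into [tau/h X <= rbar_j - rho_m]; the upper bound is symmetric. *)

Lemma rsum_ext n f g : (forall i, (i < n)%nat -> f i = g i) -> rsum n f = rsum n g.
Proof.
  induction n as [|n IH]; intros Hfg; simpl; [reflexivity|].
  rewrite IH by (intros; apply Hfg; lia).
  rewrite Hfg by lia; reflexivity.
Qed.

Lemma rsum_le n f g : (forall i, (i < n)%nat -> f i <= g i) -> rsum n f <= rsum n g.
Proof.
  induction n as [|n IH]; intros Hfg; simpl; [lra|].
  assert (rsum n f <= rsum n g) by (apply IH; intros; apply Hfg; lia).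
  specialize (Hfg n ltac:(lia)); lra.
Qed.

Lemma rsum_nonneg n f : (forall i, (i < n)%nat -> 0 <= f i) -> 0 <= rsum n f.
Proof.
  induction n as [|n IH]; intros Hf; simpl; [lra|].
  assert (0 <= rsum n f) by (apply IH; intros; apply Hf; lia).
  specialize (Hf n ltac:(lia)); lra.
Qed.

Lemma rsum_term_le n f k : (forall i, (i < n)%nat -> 0 <= f i) -> (k < n)%nat ->
  f k <= rsum n f.
Proof.
  induction n as [|n IH]; intros Hf Hk; simpl; [lia|].
  assert (0 <= rsum n f) by (apply rsum_nonneg; intros; apply Hf; lia).
  destruct (Nat.eq_dec k n) as [->|Hne]; [lra|].
  assert (f k <= rsum n f) by (apply IH; [intros; apply Hf|]; lia).
  specialize (Hf n ltac:(lia)); lra.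
Qed.

Lemma rsum_plus n f g : rsum n (fun i => f i + g i) = rsum n f + rsum n g.
Proof. induction n; simpl; lra. Qed.

Lemma rsum_minus n f g : rsum n (fun i => f i - g i) = rsum n f - rsum n g.
Proof. induction n; simpl; lra. Qed.

Lemma rsum_scal n c f : rsum n (fun i => c * f i) = c * rsum n f.
Proof. induction n; simpl; lra. Qed.

Lemma rsum_swap n m F :
  rsum n (fun k => rsum m (fun i => F k i)) = rsum m (fun i => rsum n (fun k => F k i)).
Proof.
  induction n as [|n IH]; simpl.
  - induction m; simpl; lra.
  - rewrite IH, <- rsum_plus; reflexivity.
Qed.

(* Summation by parts with nonincreasing nonnegative weights; the invariant carries
   the tail term [W (n-1) * (q n - m)], which is nonnegative. *)
Lemma abel_lower_bound n (W q : nat -> R) m : (1 <= n)%nat ->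
  (forall k, (S k < n)%nat -> W (S k) <= W k) ->
  (forall k, (k < n)%nat -> 0 <= W k) ->
  (forall k, (1 <= k <= n)%nat -> m <= q k) ->
  W 0%nat * (m - q 0%nat) <= rsum n (fun k => W k * (q (S k) - q k)).
Proof.
  intros Hn Hdecr Hpos Hq.
  assert (Hinv : forall p, (1 <= p <= n)%nat ->
    W (pred p) * (q p - m) + W 0%nat * (m - q 0%nat)
      <= rsum p (fun k => W k * (q (S k) - q k))).
  { induction p as [|[|p] IH]; intros Hp; [lia|simpl; lra|].
    specialize (IH ltac:(lia)); simpl in *.
    assert (0 <= (W p - W (S p)) * (q (S p) - m)).
    { apply Rmult_le_pos; [specialize (Hdecr p ltac:(lia))|specialize (Hq (S p) ltac:(lia))]; lra. }
    lra. }
  specialize (Hinv n ltac:(lia)).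
  assert (0 <= W (pred n) * (q n - m)).
  { apply Rmult_le_pos; [apply Hpos; lia|specialize (Hq n ltac:(lia)); lra]. }
  lra.
Qed.

Lemma abel_upper_bound n (W q : nat -> R) M : (1 <= n)%nat ->
  (forall k, (S k < n)%nat -> W (S k) <= W k) ->
  (forall k, (k < n)%nat -> 0 <= W k) ->
  (forall k, (1 <= k <= n)%nat -> q k <= M) ->
  rsum n (fun k => W k * (q (S k) - q k)) <= W 0%nat * (M - q 0%nat).
Proof.
  intros Hn Hdecr Hpos Hq.
  pose proof (abel_lower_bound n W (fun k => - q k) (- M) Hn Hdecr Hpos
    ltac:(intros k Hk; specialize (Hq k Hk); lra)) as Hlow.
  rewrite (rsum_ext n _ (fun k => -1 * (W k * (q (S k) - q k)))), rsum_scal in Hlow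
    by (intros; ring).
  lra.
Qed.

Lemma rsum2_weighted_mean_bounds n m (c : R) (W f : nat -> nat -> R) lo hi : 0 <= c ->
  c * rsum n (fun k => rsum m (fun i => W k i)) = 1 ->
  (forall k i, (k < n)%nat -> (i < m)%nat -> 0 <= W k i) ->
  (forall k i, (k < n)%nat -> (i < m)%nat -> lo <= f k i <= hi) ->
  lo <= c * rsum n (fun k => rsum m (fun i => W k i * f k i)) <= hi.
Proof.
  intros Hc Hsum HW Hf.
  assert (Hconst : forall z, c * rsum n (fun k => rsum m (fun i => W k i * z)) = z).
  { intros z.
    rewrite (rsum_ext n _ (fun k => z * rsum m (fun i => W k i))), rsum_scal.
    - rewrite <- Rmult_assoc, (Rmult_comm c z), Rmult_assoc, Hsum; ring.
    - intros; rewrite <- rsum_scal; apply rsum_ext; intros; ring. }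
  rewrite <- (Hconst lo) at 1; rewrite <- (Hconst hi).
  split; apply Rmult_le_compat_l; trivial; apply rsum_le; intros k Hk;
    apply rsum_le; intros i Hi; apply Rmult_le_compat_l; try apply HW; trivial;
    apply Hf; trivial.
Qed.

Definition clamp (a b t : R) : R := Rmax a (Rmin b t).

Lemma clamp_in a b t : a <= b -> a <= clamp a b t <= b.
Proof. intros; unfold clamp, Rmax, Rmin; repeat destruct Rle_dec; lra. Qed.

Lemma clamp_id a b t : a <= t <= b -> clamp a b t = t.
Proof. intros; unfold clamp, Rmax, Rmin; repeat destruct Rle_dec; lra. Qed.

Lemma clamp_dist_le a b t z : a <= b -> a <= z <= b -> Rabs (clamp a b t - z) <= Rabs (t - z).
Proof.
  intros; unfold clamp, Rmax, Rmin; repeat destruct Rle_dec;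
    unfold Rabs; repeat destruct Rcase_abs; lra.
Qed.

(* Clamping turns continuity relative to [a,b] into plain continuity, which is
   what the Stdlib mean value theorem asks for. *)
Lemma cont_on_clamp f a b z : a <= b -> cont_on f a b -> a <= z <= b ->
  continuity_pt (fun t => f (clamp a b t)) z.
Proof.
  intros Hab Hf Hz eps Heps.
  destruct (Hf z Hz eps Heps) as [alp [Halp Hclose]].
  exists alp; split; [exact Halp|]; intros t [_ Ht]; simpl in *; unfold R_dist in *.
  rewrite (clamp_id a b z Hz); apply Hclose; split; [apply clamp_in; trivial|].
  eapply Rle_lt_trans; [apply clamp_dist_le|]; trivial.
Qed.

Lemma derivable_pt_lim_clamp f df a b c : a < c < b ->
  (forall x, a < x < b -> derivable_pt_lim f x (df x)) ->
  derivable_pt_lim (fun t => f (clamp a b t)) c (df c).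
Proof.
  intros Hc Hf eps Heps.
  destruct (Hf c Hc eps Heps) as [d Hd].
  assert (Hpos : 0 < Rmin d (Rmin (c - a) (b - c))).
  { destruct d as [d dpos]; simpl; repeat apply Rmin_pos; lra. }
  exists (mkposreal _ Hpos); intros h Hh0 Hh; simpl in Hh.
  pose proof (Rmin_l d (Rmin (c - a) (b - c))).
  pose proof (Rmin_r d (Rmin (c - a) (b - c))).
  pose proof (Rmin_l (c - a) (b - c)). pose proof (Rmin_r (c - a) (b - c)).
  rewrite (clamp_id a b c), (clamp_id a b (c + h)) by
    (revert Hh; unfold Rabs; destruct Rcase_abs; lra).
  apply Hd; [exact Hh0|lra].
Qed.

Lemma C1_on_MVT f df a b : C1_on f df a b -> forall x y, a <= x -> x < y -> y <= b ->
  exists c, x < c < y /\ f y - f x = df c * (y - x).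
Proof.
  intros [Hf [_ Hdf]] x y Hax Hxy Hyb.
  set (fc := fun t => f (clamp a b t)).
  assert (Hder : forall c, x < c < y -> derivable_pt_lim fc c (df c))
    by (intros; apply derivable_pt_lim_clamp; trivial; lra).
  assert (pr : forall c, x < c < y -> derivable_pt fc c)
    by (intros c Hc; exists (df c); apply Hder; trivial).
  destruct (MVT fc id x y pr (fun c _ => derivable_pt_id c) Hxy) as [c [Hc Heq]].
  - intros; apply cont_on_clamp; trivial; lra.
  - intros; apply derivable_continuous_pt, derivable_pt_id.
  - exists c; split; [exact Hc|].
    rewrite derive_pt_id, (derive_pt_eq_0 fc c (df c) (pr c Hc) (Hder c Hc)) in Heq.
    unfold fc, id in Heq; rewrite !clamp_id in Heq by lra; lra.
Qed.

Lemma C1_on_diff_le f df a b L : C1_on f df a b -> (forall x, a <= x <= b -> df x <= L) ->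
  forall x y, a <= x -> x <= y -> y <= b -> f y - f x <= L * (y - x).
Proof.
  intros Hf HL x y Hx Hxy Hy.
  destruct (Req_dec x y) as [->|Hne]; [lra|].
  destruct (C1_on_MVT f df a b Hf x y Hx ltac:(lra) Hy) as [c [Hc ->]].
  specialize (HL c ltac:(lra)); nra.
Qed.

Lemma C1_on_diff_ge f df a b L : C1_on f df a b -> (forall x, a <= x <= b -> L <= df x) ->
  forall x y, a <= x -> x <= y -> y <= b -> L * (y - x) <= f y - f x.
Proof.
  intros Hf HL x y Hx Hxy Hy.
  destruct (Req_dec x y) as [->|Hne]; [lra|].
  destruct (C1_on_MVT f df a b Hf x y Hx ltac:(lra) Hy) as [c [Hc ->]].
  specialize (HL c ltac:(lra)); nra.
Qed.

Lemma supnorm_bound f a b n x : is_supnorm f a b n -> a <= x <= b -> Rabs (f x) <= n.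
Proof. intros [Hub _] Hx; apply Hub; exists x; auto. Qed.

Lemma nonneg_supnorm_bounds f a b n :
  (forall x, a <= x <= b -> 0 <= f x) -> is_supnorm f a b n ->
  forall x, a <= x <= b -> 0 <= f x <= n.
Proof.
  intros Hpos Hn x Hx; specialize (Hpos x Hx); pose proof (supnorm_bound f a b n x Hn Hx).
  rewrite Rabs_right in * by lra; lra.
Qed.

Lemma nonpos_supnorm_bounds f a b n :
  (forall x, a <= x <= b -> f x <= 0) -> is_supnorm f a b n ->
  forall x, a <= x <= b -> - n <= f x <= 0.
Proof.
  intros Hneg Hn x Hx; specialize (Hneg x Hx); pose proof (supnorm_bound f a b n x Hn Hx).
  rewrite Rabs_left1 in * by lra; lra.
Qed.

Lemma C1_on_nondecr_diff_le f df a b L : C1_on f df a b ->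
  (forall x, a <= x <= b -> 0 <= df x <= L) ->
  forall x y, a <= x <= b -> a <= y <= b -> f x - f y <= L * Rmax 0 (x - y).
Proof.
  intros Hf HL x y Hx Hy.
  destruct (Rle_lt_dec y x) as [Hyx|Hxy].
  - rewrite Rmax_right by lra.
    apply (C1_on_diff_le f df a b); [exact Hf|intros z Hz; apply HL, Hz|lra..].
  - rewrite Rmax_left by lra.
    pose proof (C1_on_diff_ge f df a b 0 Hf ltac:(intros z Hz; apply HL, Hz) x y
      ltac:(lra) ltac:(lra) ltac:(lra)); lra.
Qed.

Lemma C1_on_nonincr_diff_le f df a b L : C1_on f df a b ->
  (forall x, a <= x <= b -> - L <= df x <= 0) ->
  forall x y, a <= x <= b -> a <= y <= b -> f x - f y <= L * Rmax 0 (y - x).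
Proof.
  intros Hf HL x y Hx Hy.
  destruct (Rle_lt_dec x y) as [Hxy|Hyx].
  - rewrite Rmax_right by lra.
    pose proof (C1_on_diff_ge f df a b (- L) Hf ltac:(intros z Hz; apply HL, Hz) x y
      ltac:(lra) Hxy ltac:(lra)); lra.
  - rewrite Rmax_left by lra.
    pose proof (C1_on_diff_le f df a b 0 Hf ltac:(intros z Hz; apply HL, Hz) y x
      ltac:(lra) ltac:(lra) ltac:(lra)); lra.
Qed.

Lemma cfl_increment_le tau h gR c K1 K2 X alpha beta S :
  0 < tau -> 0 < h -> 0 < gR -> 0 <= c -> 0 <= K1 -> 0 <= K2 -> 0 <= alpha ->
  X <= K1 * alpha + K2 * beta -> gR * alpha <= S -> beta <= c * S ->
  tau * (gR * c * K2 + K1) <= gR * h -> tau / h * X <= S.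
Proof.
  intros Htau Hh HgR Hc HK1 HK2 Halpha HX HS Hbeta HCFL.
  assert (HS0 : 0 <= S) by nra.
  assert (Hgx : gR * X <= (gR * c * K2 + K1) * S).
  { pose proof (Rmult_le_compat_l gR _ _ ltac:(lra) HX).
    pose proof (Rmult_le_pos K1 (S - gR * alpha) HK1 ltac:(lra)).
    pose proof (Rmult_le_pos (gR * K2) (c * S - beta) ltac:(nra) ltac:(lra)).
    nra. }
  assert (Htx : gR * (tau * X) <= gR * (h * S)).
  { pose proof (Rmult_le_compat_l tau _ _ ltac:(lra) Hgx).
    pose proof (Rmult_le_compat_r S _ _ HS0 HCFL). nra. }
  assert (tau * X <= h * S) by (apply Rmult_le_reg_l with gR; lra).
  replace (tau / h * X) with (tau * X * / h) by (field; lra).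
  replace S with (h * S * / h) by (field; lra).
  apply Rmult_le_compat_r; [left; apply Rinv_0_lt_compat|]; lra.
Qed.

Lemma bounded_mult_le p P x X : 0 <= p <= P -> x <= X -> 0 <= X -> p * x <= P * X.
Proof. intros; nra. Qed.

Section FluxIncrement.

Variables (g v : R -> R) (ng nv Lg Lv lo hi : R).
Hypothesis Hg : forall x, lo <= x <= hi -> 0 <= g x <= ng.
Hypothesis Hv : forall x, lo <= x <= hi -> 0 <= v x <= nv.
Hypothesis HLg : 0 <= Lg.
Hypothesis HLv : 0 <= Lv.
Hypothesis Hg_lip : forall x y, lo <= x <= hi -> lo <= y <= hi -> g x - g y <= Lg * Rmax 0 (x - y).
Hypothesis Hv_lip : forall x y, lo <= x <= hi -> lo <= y <= hi -> v x - v y <= Lv * Rmax 0 (y - x).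

Lemma flux_increment_le a b Ap Am :
  lo <= a <= hi -> lo <= b <= hi -> lo <= Ap <= hi -> lo <= Am <= hi ->
  v Ap * g a - v Am * g b <= nv * Lg * Rmax 0 (a - b) + ng * Lv * Rmax 0 (Am - Ap).
Proof.
  intros Ha Hb HAp HAm.
  assert (Hjump_g : v Ap * (g a - g b) <= nv * (Lg * Rmax 0 (a - b))).
  { apply bounded_mult_le; auto; apply Rmult_le_pos; [exact HLg|apply Rmax_l]. }
  assert (Hjump_v : g b * (v Ap - v Am) <= ng * (Lv * Rmax 0 (Am - Ap))).
  { apply bounded_mult_le; auto; apply Rmult_le_pos; [exact HLv|apply Rmax_l]. }
  lra.
Qed.

Lemma flux_increment_ge a b Ap Am :
  lo <= a <= hi -> lo <= b <= hi -> lo <= Ap <= hi -> lo <= Am <= hi ->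
  - (nv * Lg * Rmax 0 (b - a) + ng * Lv * Rmax 0 (Ap - Am)) <= v Ap * g a - v Am * g b.
Proof.
  intros Ha Hb HAp HAm.
  assert (Hjump_g : v Ap * (g b - g a) <= nv * (Lg * Rmax 0 (b - a))).
  { apply bounded_mult_le; auto; apply Rmult_le_pos; [exact HLg|apply Rmax_l]. }
  assert (Hjump_v : g b * (v Am - v Ap) <= ng * (Lv * Rmax 0 (Ap - Am))).
  { apply bounded_mult_le; auto; apply Rmult_le_pos; [exact HLv|apply Rmax_l]. }
  lra.
Qed.

Lemma flux_update_bounds rm rM rb a b Ap Am tau h gR w0 :
  lo <= rm -> rM <= hi ->
  rm <= a <= rM -> rm <= b <= rM -> rm <= Ap <= rM -> rm <= Am <= rM ->
  gR * (a - rm) <= rb - rm -> gR * (rM - a) <= rM - rb ->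
  h * w0 * (rm - rb) <= Ap - Am <= h * w0 * (rM - rb) ->
  0 < tau -> 0 < h -> 0 < gR -> 0 <= w0 ->
  tau * (gR * h * w0 * Lv * ng + nv * Lg) <= gR * h ->
  rm <= rb - tau / h * (v Ap * g a - v Am * g b) <= rM.
Proof.
  intros Hlo Hhi Ha Hb HAp HAm Hlast_lo Hlast_hi [Hdiff_lo Hdiff_hi] Htau Hh HgR Hw0 HCFL.
  assert (Hnv : 0 <= nv) by (pose proof (Hv a ltac:(lra)); lra).
  assert (Hng : 0 <= ng) by (pose proof (Hg a ltac:(lra)); lra).
  assert (HCFL' : tau * (gR * (h * w0) * (ng * Lv) + nv * Lg) <= gR * h)
    by (replace (gR * (h * w0) * (ng * Lv)) with (gR * h * w0 * Lv * ng) by ring; exact HCFL).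
  split.
  - assert (tau / h * (v Ap * g a - v Am * g b) <= rb - rm); [|lra].
    apply (cfl_increment_le tau h gR (h * w0) (nv * Lg) (ng * Lv) _ (a - rm) (Rmax 0 (Am - Ap)));
      try (apply Rmult_le_pos); try lra.
    + eapply Rle_trans; [apply flux_increment_le; lra|].
      apply Rplus_le_compat_r, Rmult_le_compat_l; [apply Rmult_le_pos; lra|].
      apply Rmax_lub; lra.
    + apply Rmax_lub; [apply Rmult_le_pos|]; nra.
  - assert (- (tau / h * (v Ap * g a - v Am * g b)) <= rM - rb); [|lra].
    replace (- (tau / h * (v Ap * g a - v Am * g b)))
      with (tau / h * (- (v Ap * g a - v Am * g b))) by ring.
    apply (cfl_increment_le tau h gR (h * w0) (nv * Lg) (ng * Lv) _ (rM - a) (Rmax 0 (Ap - Am)));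
      try (apply Rmult_le_pos); try lra.
    + pose proof (flux_increment_ge a b Ap Am ltac:(lra) ltac:(lra) ltac:(lra) ltac:(lra)).
      assert (nv * Lg * Rmax 0 (b - a) <= nv * Lg * (rM - a)); [|lra].
      apply Rmult_le_compat_l; [apply Rmult_le_pos; lra|].
      apply Rmax_lub; lra.
    + apply Rmax_lub; [apply Rmult_le_pos|]; nra.
Qed.

End FluxIncrement.

Lemma recon_last_node x0 h y P Rn j : y Rn = 1 ->
  peval (P j) (xhalf x0 h j) = recon x0 h y P j Rn.
Proof. intros HyR; unfold recon, xhalf; rewrite HyR; f_equal; lra. Qed.

Section Reconstruction.

Variables (w : R -> R) (eta h x0 rho_m rho_M : R) (N Rn : nat) (gam y : nat -> R)
  (P : Z -> list R).

Hypothesis Heta : 0 < eta.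
Hypothesis Hh : 0 < h.
Hypothesis HNh : INR N * h = eta.
Hypothesis Hy : forall nu, (1 <= nu <= Rn)%nat -> 0 <= y nu <= 1.
Hypothesis Hgam : forall nu, (1 <= nu <= Rn)%nat -> 0 < gam nu.
Hypothesis Hgamsum : rsum Rn (fun i => gam (S i)) = 1.
Hypothesis Hw0 : forall x, 0 <= x <= eta -> 0 <= w x.
Hypothesis Hw_nonincr : forall s t, 0 <= s -> s <= t -> t <= eta -> w t <= w s.
Hypothesis HPval : forall l nu, (1 <= nu <= Rn)%nat -> rho_m <= recon x0 h y P l nu <= rho_M.

Definition face_arg (j : Z) : R :=
  h * rsum N (fun k => rsum Rn (fun i =>
        gam (S i) * w ((INR k + y (S i)) * h) * recon x0 h y P (j + Z.of_nat k + 1)%Z (S i))).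

Definition cell_quad (l : Z) : R := rsum Rn (fun i => gam (S i) * recon x0 h y P l (S i)).

Lemma grid_nonempty : (1 <= N)%nat.
Proof. apply (INR_lt 0 N); simpl; nra. Qed.

Lemma quad_node_in_window i k : (i < Rn)%nat -> (k < N)%nat ->
  0 <= (INR k + y (S i)) * h <= eta.
Proof.
  intros Hi Hk; pose proof (Hy (S i) ltac:(lia)); pose proof (pos_INR k).
  assert (INR (S k) <= INR N) by (apply le_INR; lia).
  rewrite S_INR in *; rewrite <- HNh; nra.
Qed.

Lemma face_arg_bounds
  (Hquadw : h * rsum N (fun k => rsum Rn (fun i => gam (S i) * w ((INR k + y (S i)) * h))) = 1)
  j :
  rho_m <= face_arg j <= rho_M.
Proof.
  apply (rsum2_weighted_mean_bounds N Rn h (fun k i => gam (S i) * w ((INR k + y (S i)) * h))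
           (fun k i => recon x0 h y P (j + Z.of_nat k + 1)%Z (S i))); [lra|exact Hquadw| |].
  - intros k i Hk Hi; apply Rmult_le_pos;
      [pose proof (Hgam (S i) ltac:(lia)); lra|apply Hw0, quad_node_in_window; trivial].
  - intros k i _ Hi; apply HPval; lia.
Qed.

(* Summation by parts in [k]: the difference of two neighbouring face arguments only
   sees the first (largest) weight [w 0] against the cell values of cell [j]. *)
Lemma face_arg_diff_bounds j :
  h * w 0 * (rho_m - cell_quad j) <= face_arg j - face_arg (j - 1)
    <= h * w 0 * (rho_M - cell_quad j).
Proof.
  set (W := fun i k => gam (S i) * w ((INR k + y (S i)) * h)).
  set (q := fun i k => recon x0 h y P (j + Z.of_nat k)%Z (S i)).
  assert (Hdiff : face_arg j - face_arg (j - 1)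
      = h * rsum Rn (fun i => rsum N (fun k => W i k * (q i (S k) - q i k)))).
  { unfold face_arg; rewrite <- Rmult_minus_distr_l, <- rsum_minus, rsum_swap; f_equal.
    apply rsum_ext; intros k _; rewrite <- rsum_minus; apply rsum_ext; intros i _.
    unfold W, q; rewrite Nat2Z.inj_succ.
    replace (j - 1 + Z.of_nat k + 1)%Z with (j + Z.of_nat k)%Z by lia.
    replace (j + Z.succ (Z.of_nat k))%Z with (j + Z.of_nat k + 1)%Z by lia; ring. }
  assert (Hcell : forall z, w 0 * (z - cell_quad j)
      = rsum Rn (fun i => gam (S i) * w 0 * (z - q i 0%nat))).
  { intros z; unfold cell_quad, q; simpl; rewrite Z.add_0_r.
    rewrite (rsum_ext Rn (fun i => gam (S i) * w 0 * (z - recon x0 h y P j (S i)))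
      (fun i => w 0 * z * gam (S i) - w 0 * (gam (S i) * recon x0 h y P j (S i))))
      by (intros; ring).
    rewrite rsum_minus, !rsum_scal, Hgamsum; ring. }
  pose proof grid_nonempty as HN.
  assert (HW_pos : forall i k, (i < Rn)%nat -> (k < N)%nat -> 0 <= W i k).
  { intros i k Hi Hk; apply Rmult_le_pos;
      [pose proof (Hgam (S i) ltac:(lia)); lra|apply Hw0, quad_node_in_window; trivial]. }
  assert (HW_nonincr : forall i k, (i < Rn)%nat -> (S k < N)%nat -> W i (S k) <= W i k).
  { intros i k Hi Hk; apply Rmult_le_compat_l; [pose proof (Hgam (S i) ltac:(lia)); lra|].
    pose proof (quad_node_in_window i k Hi ltac:(lia)).
    pose proof (quad_node_in_window i (S k) Hi Hk).
    apply Hw_nonincr; try lra; rewrite S_INR; nra. }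
  assert (HW_first : forall i, (i < Rn)%nat -> W i 0%nat <= gam (S i) * w 0).
  { intros i Hi; apply Rmult_le_compat_l; [pose proof (Hgam (S i) ltac:(lia)); lra|].
    pose proof (quad_node_in_window i 0 Hi HN); apply Hw_nonincr; lra. }
  rewrite Hdiff, !Rmult_assoc, !Hcell.
  split; apply Rmult_le_compat_l; try lra; apply rsum_le; intros i Hi;
    pose proof (HW_first i Hi); pose proof (HW_pos i 0%nat Hi ltac:(lia));
    pose proof (HPval (j + Z.of_nat 0)%Z (S i) ltac:(lia)); fold (q i 0%nat) in *.
  - pose proof (abel_lower_bound N (W i) (q i) rho_m HN
      ltac:(intros; apply HW_nonincr; trivial) ltac:(intros; apply HW_pos; trivial)
      ltac:(intros k Hk; apply (HPval (j + Z.of_nat k)%Z (S i)); lia)); nra.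
  - pose proof (abel_upper_bound N (W i) (q i) rho_M HN
      ltac:(intros; apply HW_nonincr; trivial) ltac:(intros; apply HW_pos; trivial)
      ltac:(intros k Hk; apply (HPval (j + Z.of_nat k)%Z (S i)); lia)); nra.
Qed.

Lemma node_weight_bounds nu j : (1 <= nu <= Rn)%nat ->
  gam nu * (recon x0 h y P j nu - rho_m) <= cell_quad j - rho_m /\
  gam nu * (rho_M - recon x0 h y P j nu) <= rho_M - cell_quad j.
Proof.
  intros Hnu.
  assert (Hdev_lo : rsum Rn (fun i => gam (S i) * (recon x0 h y P j (S i) - rho_m))
                    = cell_quad j - rho_m).
  { unfold cell_quad.
    rewrite (rsum_ext Rn _ (fun i => gam (S i) * recon x0 h y P j (S i) - rho_m * gam (S i)))
      by (intros; ring).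
    rewrite rsum_minus, rsum_scal, Hgamsum; ring. }
  assert (Hdev_hi : rsum Rn (fun i => gam (S i) * (rho_M - recon x0 h y P j (S i)))
                    = rho_M - cell_quad j).
  { unfold cell_quad.
    rewrite (rsum_ext Rn _ (fun i => rho_M * gam (S i) - gam (S i) * recon x0 h y P j (S i)))
      by (intros; ring).
    rewrite rsum_minus, rsum_scal, Hgamsum; ring. }
  rewrite <- Hdev_lo, <- Hdev_hi, <- (Nat.succ_pred_pos nu) by lia.
  split;
    [apply (rsum_term_le Rn (fun i => gam (S i) * (recon x0 h y P j (S i) - rho_m)))
    |apply (rsum_term_le Rn (fun i => gam (S i) * (rho_M - recon x0 h y P j (S i))))];
    try lia; intros i Hi; pose proof (Hgam (S i) ltac:(lia));
    pose proof (HPval j (S i) ltac:(lia)); apply Rmult_le_pos; lra.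
Qed.

End Reconstruction.

Theorem theorem3p1
  (rho_max eta : R) (g dg v dv w dw : R -> R)
  (ng ndg nv ndv : R)
  (rho_m rho_M : R) (h tau x0 : R) (N Rn : nat) (gam y : nat -> R)
  (rbar : Z -> R) (P : Z -> list R)
  (Hrmax : 0 < rho_max) (Heta : 0 < eta)
  (Hg : C1_on g dg 0 rho_max)
  (Hg0 : forall x, 0 <= x <= rho_max -> 0 <= g x)
  (Hdg : forall x, 0 <= x <= rho_max -> 0 <= dg x)
  (Hv : C1_on v dv 0 rho_max)
  (Hv0 : forall x, 0 <= x <= rho_max -> 0 <= v x)
  (Hdv : forall x, 0 <= x <= rho_max -> dv x <= 0)
  (Hw : C1_on w dw 0 eta)
  (Hw0 : forall x, 0 <= x <= eta -> 0 <= w x)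
  (Hdw : forall x, 0 <= x <= eta -> dw x <= 0)
  (Hwint : exists pr : Riemann_integrable w 0 eta, RiemannInt pr = 1)
  (Hng : is_supnorm g 0 rho_max ng)
  (Hndg : is_supnorm dg 0 rho_max ndg)
  (Hnv : is_supnorm v 0 rho_max nv)
  (Hndv : is_supnorm dv 0 rho_max ndv)
  (Hm : 0 <= rho_m) (HmM : rho_m <= rho_M) (HM : rho_M <= rho_max)
  (Hh : 0 < h) (HNh : INR N * h = eta)
  (HRn : (1 <= Rn)%nat)
  (Hy : forall nu, (1 <= nu <= Rn)%nat -> 0 <= y nu <= 1)
  (HyR : y Rn = 1)
  (Hgam : forall nu, (1 <= nu <= Rn)%nat -> 0 < gam nu)
  (Hgamsum : rsum Rn (fun i => gam (S i)) = 1)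
  (Hquadw : h * rsum N (fun k => rsum Rn (fun i =>
              gam (S i) * w ((INR k + y (S i)) * h))) = 1)
  (Hrbar : forall j, rho_m <= rbar j <= rho_M)
  (HP : forall l : Z,
      exists pr : Riemann_integrable (peval (P l))
                    (xmid x0 h l - h / 2) (xmid x0 h l + h / 2),
        RiemannInt pr / h = rbar l /\
        RiemannInt pr / h = rsum Rn (fun i => gam (S i) * recon x0 h y P l (S i)))
  (HPval : forall (l : Z) (nu : nat), (1 <= nu <= Rn)%nat ->
      rho_m <= recon x0 h y P l nu <= rho_M)
  (Htau : 0 < tau)
  (HCFL : tau * (gam Rn * h * w 0 * ndv * ng + nv * ndg) <= gam Rn * h) :
  forall j : Z,
    rho_m <= euler_update g v w h tau N Rn gam y x0 P rbar j <= rho_M.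
Proof.
  intros j.
  pose proof (nonneg_supnorm_bounds dg _ _ _ Hdg Hndg) as Hdg_bd.
  pose proof (nonpos_supnorm_bounds dv _ _ _ Hdv Hndv) as Hdv_bd.
  assert (Hw_nonincr : forall s t, 0 <= s -> s <= t -> t <= eta -> w t <= w s).
  { intros s t Hs Hst Ht.
    pose proof (C1_on_diff_le w dw 0 eta 0 Hw Hdw s t Hs Hst Ht); lra. }
  assert (Hcell : rbar j = cell_quad h x0 Rn gam y P j)
    by (destruct (HP j) as [pr [Havg Hquad]]; unfold cell_quad; congruence).
  unfold euler_update.
  rewrite !(recon_last_node x0 h y P Rn _ HyR), Hcell.
  change (Vface v w h N Rn gam y x0 P ?k) with (v (face_arg w h x0 N Rn gam y P k)).
  apply (flux_update_bounds g v ng nv ndg ndv 0 rho_max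
           (nonneg_supnorm_bounds g _ _ _ Hg0 Hng) (nonneg_supnorm_bounds v _ _ _ Hv0 Hnv)
           ltac:(pose proof (Hdg_bd 0); lra) ltac:(pose proof (Hdv_bd 0); lra)
           (C1_on_nondecr_diff_le g dg _ _ _ Hg Hdg_bd)
           (C1_on_nonincr_diff_le v dv _ _ _ Hv Hdv_bd)) with (gR := gam Rn) (w0 := w 0);
    try solve [assumption | lra | apply HPval; lia | apply Hgam; lia].
  - apply (face_arg_bounds w eta); assumption.
  - apply (face_arg_bounds w eta); assumption.
  - apply (node_weight_bounds h x0 rho_m rho_M Rn); trivial; lia.
  - apply (node_weight_bounds h x0 rho_m rho_M Rn); trivial; lia.
  - apply (face_arg_diff_bounds w eta); assumption.
  - apply Hw0; lra.
Qed.
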